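(* Let $A,B$ be non-empty sets, $I$ a non-empty index set, $\{V_i\}_{i\in I}\subseteq\mathcal R(A)$, $\{W_i\}_{i\in I}\subseteq\mathcal R(B)$, and let $Z\in\mathcal R(A,B)$ be a uniform fuzzy relation such that the system $WL^{2\text{-}3}(A,B,I,V_i,W_i,Z)$ has a solution which is a uniform fuzzy relation. Then the greatest solution $R$ to $WL^{2\text{-}3}(A,B,I,V_i,W_i,Z)$ is a uniform fuzzy relation, $E_A^R$ is the greatest solution to $WL^{1\text{-}4}(A,I,V_i,Z\circ Z^{-1})$, and $E_B^R$ is the greatest solution to $WL^{1\text{-}4}(B,I,W_i,Z^{-1}\circ Z)$.
   Context: $\mathcal L=(L,\wedge,\vee,\otimes,\to,0,1)$ is a complete residuated lattice; $x\leftrightarrow y=(x\to y)\wedge(y\to x)$. For non-empty sets $X,Y$, $\mathcal R(X,Y)$ is the set of fuzzy relations $X\times Y\to L$, $\mathcal R(X)=\mathcal R(X,X)$, ordered pointwise; $R^{-1}(y,x)=R(x,y)$; $(R\circ S)(x,t)=\bigvee_{y}R(x,y)\otimes S(y,t)$. For $R\in\mathcal R(A,B)$: kernel $E_A^R(a_1,a_2)=\bigwedge_{b\in B}R(a_1,b)\leftrightarrow R(a_2,b)$; co-kernel $E_B^R(b_1,b_2)=\bigwedge_{a\in A}R(a,b_1)\leftrightarrow R(a,b_2)$. $R$ is uniform if every $a$ has some $b$ with $R(a,b)=1$, every $b$ has some $a$ with $R(a,b)=1$, and $R(a,b_1)\otimes R(a,b_2)\le E_B^R(b_1,b_2)$ for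 all $a,b_1,b_2$. $WL^{2\text{-}3}(A,B,I,V_i,W_i,Z)$ (unknown $U\in\mathcal R(A,B)$): $U^{-1}\circ V_i\le W_i\circ U^{-1}$ and $U\circ W_i\le V_i\circ U$ for all $i$, and $U\le Z$; it always has a greatest solution. $WL^{1\text{-}4}(X,I,V_i,W)$ (unknown $U\in\mathcal R(X)$): $U\circ V_i\le V_i\circ U$ and $U^{-1}\circ V_i\le V_i\circ U^{-1}$ for all $i$, and $U\le W$, $U^{-1}\le W$. *)

Set Implicit Arguments.
Unset Strict Implicit.

(* The lattice is given by its order and arbitrary suprema/infima of subsets
   (subsets are predicates on L); binary meet/join are the induced ones. *)
Record CRL := {
  car :> Type;
  le : car -> car -> Prop;
  sup : (car -> Prop) -> car;
  inf : (car -> Prop) -> car;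
  otimes : car -> car -> car;
  res : car -> car -> car;
  zero : car;
  one : car;
  le_refl : forall x, le x x;
  le_antisym : forall x y, le x y -> le y x -> x = y;
  le_trans : forall x y z, le x y -> le y z -> le x z;
  sup_ub : forall (P : car -> Prop) x, P x -> le x (sup P);
  sup_least : forall (P : car -> Prop) y, (forall x, P x -> le x y) -> le (sup P) y;
  inf_lb : forall (P : car -> Prop) x, P x -> le (inf P) x;
  inf_greatest : forall (P : car -> Prop) y, (forall x, P x -> le y x) -> le y (inf P);
  zero_le : forall x, le zero x;
  le_one : forall x, le x one;
  otimes_assoc : forall x y z, otimes x (otimes y z) = otimes (otimes x y) z;
  otimes_comm : forall x y, otimes x y = otimes y x;
  otimes_one : forall x, otimes x one = x;
  adjoint : forall x y z, le (otimes x y) z <-> le x (res y z)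
}.

Arguments le {c}. Arguments sup {c}. Arguments inf {c}.
Arguments otimes {c}. Arguments res {c}. Arguments zero {c}. Arguments one {c}.

Section FuzzyRel.
Variable L : CRL.

Definition meet (x y : L) : L := inf (fun z => z = x \/ z = y).
Definition join (x y : L) : L := sup (fun z => z = x \/ z = y).
Definition biimp (x y : L) : L := meet (res x y) (res y x).

Definition bigsup (I : Type) (f : I -> L) : L := sup (fun z => exists i, z = f i).
Definition biginf (I : Type) (f : I -> L) : L := inf (fun z => exists i, z = f i).

Definition frel (X Y : Type) := X -> Y -> L.

Definition rle (X Y : Type) (R S : frel X Y) : Prop :=
  forall x y, le (R x y) (S x y).

Definition rinv (X Y : Type) (R : frel X Y) : frel Y X := fun y x => R x y.

Definition rcomp (X Y T : Type) (R : frel X Y) (S : frel Y T) : frel X T :=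
  fun x t => bigsup (fun y : Y => otimes (R x y) (S y t)).

Definition kernel (A B : Type) (R : frel A B) : frel A A :=
  fun a1 a2 => biginf (fun b : B => biimp (R a1 b) (R a2 b)).
Definition cokernel (A B : Type) (R : frel A B) : frel B B :=
  fun b1 b2 => biginf (fun a : A => biimp (R a b1) (R a b2)).

Definition uniform (A B : Type) (R : frel A B) : Prop :=
  (forall a, exists b, R a b = one) /\
  (forall b, exists a, R a b = one) /\
  (forall a b1 b2, le (otimes (R a b1) (R a b2)) (cokernel R b1 b2)).

Definition WL23_sol (A B I : Type) (V : I -> frel A A) (W : I -> frel B B)
  (Z : frel A B) (U : frel A B) : Prop :=
  (forall i, rle (rcomp (rinv U) (V i)) (rcomp (W i) (rinv U))) /\
  (forall i, rle (rcomp U (W i)) (rcomp (V i) U)) /\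
  rle U Z.

Definition WL14_sol (X I : Type) (V : I -> frel X X) (W : frel X X)
  (U : frel X X) : Prop :=
  (forall i, rle (rcomp U (V i)) (rcomp (V i) U)) /\
  (forall i, rle (rcomp (rinv U) (V i)) (rcomp (V i) (rinv U))) /\
  rle U W /\ rle (rinv U) W.

Definition greatest (X Y : Type) (P : frel X Y -> Prop) (R : frel X Y) : Prop :=
  P R /\ forall S, P S -> rle S R.

End FuzzyRel.

(* The greatest solution R is stable under every operation that preserves solutions of
   the weakly linked system: composing solutions with each other, with their inverses,
   and with solutions of WL^{1-4}.  Since Z is uniform, Z o Z^-1 o Z <= Z, so R o R^-1 o R,
   S o R and S^-1 o R (for S solving WL^{1-4}) are again solutions, hence below R.
   The first fact makes R difunctional, hence uniform; for a uniform R the kernel is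
   R o R^-1, and the second fact says exactly that every solution S lies below the kernel.
   The co-kernel statement is the kernel statement for R^-1. *)
From Stdlib Require Import FunctionalExtensionality.

Set Implicit Arguments.
Unset Strict Implicit.

Section ResiduatedLattice.
Variable L : CRL.
Implicit Types x y z : L.

Lemma one_otimes x : otimes one x = x.
Proof. rewrite otimes_comm; apply otimes_one. Qed.

Lemma otimes_monol x x' y : le x x' -> le (otimes x y) (otimes x' y).
Proof.
  intro Hx; apply <- adjoint; apply le_trans with x'; [exact Hx|].
  apply -> adjoint; apply le_refl.
Qed.

Lemma otimes_mono x x' y y' : le x x' -> le y y' -> le (otimes x y) (otimes x' y').
Proof.
  intros Hx Hy; apply le_trans with (otimes x' y); [now apply otimes_monol|].
  rewrite !(otimes_comm x'); now apply otimes_monol.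
Qed.

Lemma otimes_res x y : le (otimes x (res x y)) y.
Proof. rewrite otimes_comm; apply <- adjoint; apply le_refl. Qed.

Lemma res_one x : le (res one x) x.
Proof. rewrite <- (one_otimes (res one x)); apply otimes_res. Qed.

Lemma le_meet z x y : le z x -> le z y -> le z (meet x y).
Proof. intros; apply inf_greatest; intros w [-> | ->]; assumption. Qed.

Lemma biimp_le_res x y : le (biimp x y) (res x y).
Proof. apply inf_lb; now left. Qed.

Lemma bigsup_ub (I : Type) (f : I -> L) i : le (f i) (bigsup f).
Proof. apply sup_ub; now exists i. Qed.

Lemma bigsup_least (I : Type) (f : I -> L) z : (forall i, le (f i) z) -> le (bigsup f) z.
Proof. intros; apply sup_least; intros w [i ->]; auto. Qed.

Lemma biginf_lb (I : Type) (f : I -> L) i : le (biginf f) (f i).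
Proof. apply inf_lb; now exists i. Qed.

Lemma biginf_greatest (I : Type) (f : I -> L) z : (forall i, le z (f i)) -> le z (biginf f).
Proof. intros; apply inf_greatest; intros w [i ->]; auto. Qed.

End ResiduatedLattice.

Section Relations.
Variable L : CRL.

Lemma rle_refl (X Y : Type) (R : frel L X Y) : rle R R.
Proof. intros x y; apply le_refl. Qed.

Lemma rle_trans (X Y : Type) (R S T : frel L X Y) : rle R S -> rle S T -> rle R T.
Proof. intros H1 H2 x y; eapply le_trans; eauto. Qed.

Lemma rle_antisym (X Y : Type) (R S : frel L X Y) : rle R S -> rle S R -> R = S.
Proof.
  intros H1 H2; extensionality x; extensionality y; now apply le_antisym.
Qed.

Lemma rinv_mono (X Y : Type) (R S : frel L X Y) : rle R S -> rle (rinv R) (rinv S).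
Proof. intros H y x; apply H. Qed.

Lemma rcomp_ub (X Y T : Type) (R : frel L X Y) (S : frel L Y T) x y t :
  le (otimes (R x y) (S y t)) (rcomp R S x t).
Proof. exact (bigsup_ub (fun y => otimes (R x y) (S y t)) y). Qed.

Lemma rcomp_least (X Y T : Type) (R : frel L X Y) (S : frel L Y T) x t z :
  (forall y, le (otimes (R x y) (S y t)) z) -> le (rcomp R S x t) z.
Proof. apply bigsup_least. Qed.

Lemma rcomp_mono (X Y T : Type) (R R' : frel L X Y) (S S' : frel L Y T) :
  rle R R' -> rle S S' -> rle (rcomp R S) (rcomp R' S').
Proof.
  intros HR HS x t; apply rcomp_least; intro y.
  eapply le_trans; [apply otimes_mono; [apply HR | apply HS] | apply rcomp_ub].
Qed.

Lemma rinv_rcomp (X Y T : Type) (R : frel L X Y) (S : frel L Y T) :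
  rinv (rcomp R S) = rcomp (rinv S) (rinv R).
Proof.
  apply rle_antisym; intros t x; apply rcomp_least; intro y; rewrite otimes_comm.
  - exact (rcomp_ub (rinv S) (rinv R) t y x).
  - exact (rcomp_ub R S x y t).
Qed.

Lemma rcomp_assoc_le (X Y U T : Type) (R : frel L X Y) (S : frel L Y U) (T' : frel L U T) :
  rle (rcomp (rcomp R S) T') (rcomp R (rcomp S T')).
Proof.
  intros x t; apply rcomp_least; intro u; apply <- adjoint.
  apply rcomp_least; intro y; apply -> adjoint.
  rewrite <- otimes_assoc; eapply le_trans; [|apply rcomp_ub].
  apply otimes_mono; [apply le_refl | apply rcomp_ub].
Qed.

(* The reverse inequality is the inverse of the forward one for the inverted relations. *)
Lemma rcompA (X Y U T : Type) (R : frel L X Y) (S : frel L Y U) (T' : frel L U T) :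
  rcomp (rcomp R S) T' = rcomp R (rcomp S T').
Proof.
  apply rle_antisym; [apply rcomp_assoc_le|].
  pose proof (rinv_mono (rcomp_assoc_le (rinv T') (rinv S) (rinv R))) as H.
  rewrite !rinv_rcomp in H; exact H.
Qed.

Definition total (X Y : Type) (R : frel L X Y) : Prop := forall x, exists y, R x y = one.

Lemma total_mono (X Y : Type) (R S : frel L X Y) : rle R S -> total R -> total S.
Proof.
  intros HRS HR x; destruct (HR x) as [y Hy]; exists y.
  apply le_antisym; [apply le_one | rewrite <- Hy; apply HRS].
Qed.

Definition difunctional (X Y : Type) (R : frel L X Y) : Prop :=
  rle (rcomp (rcomp R (rinv R)) R) R.

Lemma difunctional_rinv (X Y : Type) (R : frel L X Y) :
  difunctional R -> difunctional (rinv R).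
Proof.
  intro HR; pose proof (rinv_mono HR) as H.
  unfold difunctional; rewrite rcompA.
  rewrite !rinv_rcomp in H; exact H.
Qed.

Lemma le_cokernel (X Y : Type) (R : frel L X Y) (S : frel L Y Y) :
  rle (rcomp R S) R -> rle (rcomp R (rinv S)) R -> rle S (cokernel R).
Proof.
  intros HS HSi y1 y2; apply biginf_greatest; intro x; apply le_meet; apply -> adjoint;
    rewrite otimes_comm.
  - exact (le_trans (rcomp_ub R S x y1 y2) (HS x y2)).
  - exact (le_trans (rcomp_ub R (rinv S) x y2 y1) (HSi x y1)).
Qed.

Lemma le_kernel (X Y : Type) (R : frel L X Y) (S : frel L X X) :
  rle (rcomp S R) R -> rle (rcomp (rinv S) R) R -> rle S (kernel R).
Proof.
  intros HS HSi; apply le_cokernel with (R := rinv R).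
  - pose proof (rinv_mono HSi) as H; rewrite rinv_rcomp in H; exact H.
  - pose proof (rinv_mono HS) as H; rewrite rinv_rcomp in H; exact H.
Qed.

Lemma difunctional_le_cokernel (X Y : Type) (R : frel L X Y) :
  difunctional R -> rle (rcomp (rinv R) R) (cokernel R).
Proof.
  intro HR; apply le_cokernel.
  - rewrite <- rcompA; exact HR.
  - rewrite rinv_rcomp, <- rcompA; exact HR.
Qed.

Lemma cokernel_le_total (X Y : Type) (R : frel L X Y) :
  total (rinv R) -> rle (cokernel R) (rcomp (rinv R) R).
Proof.
  intros HR y1 y2; destruct (HR y1) as [x Hx]; unfold rinv in Hx.
  eapply le_trans; [|apply (rcomp_ub (rinv R) R y1 x y2)]; unfold rinv.
  rewrite Hx, one_otimes.
  eapply le_trans; [apply (biginf_lb (fun x => biimp (R x y1) (R x y2)) x) |].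
  eapply le_trans; [apply biimp_le_res | rewrite Hx; apply res_one].
Qed.

Lemma cokernel_eq (X Y : Type) (R : frel L X Y) :
  total (rinv R) -> difunctional R -> cokernel R = rcomp (rinv R) R.
Proof.
  intros Ht Hd; apply rle_antisym;
    [now apply cokernel_le_total | now apply difunctional_le_cokernel].
Qed.

Lemma kernel_eq (X Y : Type) (R : frel L X Y) :
  total R -> difunctional R -> kernel R = rcomp R (rinv R).
Proof. intros Ht Hd; exact (cokernel_eq (R := rinv R) Ht (difunctional_rinv Hd)). Qed.

Lemma uniform_difunctional (X Y : Type) (R : frel L X Y) : uniform R -> difunctional R.
Proof.
  intros [_ [_ HR]] x y; apply rcomp_least; intro x'; apply <- adjoint.
  apply rcomp_least; intro y'; apply -> adjoint; unfold rinv.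
  rewrite <- otimes_assoc; eapply le_trans; [|apply (otimes_res (R x y'))].
  apply otimes_mono; [apply le_refl|].
  eapply le_trans; [apply HR|].
  eapply le_trans; [apply (biginf_lb (fun x => biimp (R x y') (R x y)) x) | apply biimp_le_res].
Qed.

Lemma total_difunctional_uniform (X Y : Type) (R : frel L X Y) :
  total R -> total (rinv R) -> difunctional R -> uniform R.
Proof.
  intros Ht Hs Hd; split; [exact Ht | split; [exact Hs|]].
  intros x y1 y2; eapply le_trans; [apply (rcomp_ub (rinv R) R y1 x y2) |].
  now apply difunctional_le_cokernel.
Qed.

(* [wlinked P Q T] is the pair of inequalities that [WL^{2-3}] imposes on [T] for one
   index; [WL^{1-4}] asks the same of [U] with [P = Q = V_i]. *)
Definition wlinked (X Y : Type) (P : frel L X X) (Q : frel L Y Y) (T : frel L X Y) : Prop :=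
  rle (rcomp (rinv T) P) (rcomp Q (rinv T)) /\ rle (rcomp T Q) (rcomp P T).

Lemma wlinked_rinv (X Y : Type) (P : frel L X X) (Q : frel L Y Y) (T : frel L X Y) :
  wlinked P Q T -> wlinked Q P (rinv T).
Proof. intros [H1 H2]; split; assumption. Qed.

Lemma wlinked_rcomp (X Y U : Type) (P : frel L X X) (Q : frel L Y Y) (Q' : frel L U U)
  (T1 : frel L X Y) (T2 : frel L Y U) :
  wlinked P Q T1 -> wlinked Q Q' T2 -> wlinked P Q' (rcomp T1 T2).
Proof.
  intros [H1 H2] [K1 K2]; split.
  - rewrite rinv_rcomp, !rcompA.
    eapply rle_trans; [apply rcomp_mono; [apply rle_refl | apply H1] |].
    rewrite <- !rcompA; apply rcomp_mono; [apply K1 | apply rle_refl].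
  - rewrite rcompA.
    eapply rle_trans; [apply rcomp_mono; [apply rle_refl | apply K2] |].
    rewrite <- !rcompA; apply rcomp_mono; [apply H2 | apply rle_refl].
Qed.

End Relations.

Section GreatestSolution.
Variable L : CRL.
Variables (A B I : Type) (V : I -> frel L A A) (W : I -> frel L B B) (Z R : frel L A B).

Lemma greatest_WL23_rinv :
  greatest (WL23_sol V W Z) R -> greatest (WL23_sol W V (rinv Z)) (rinv R).
Proof.
  intros [[H1 [H2 H3]] Hmax]; split.
  - split; [exact H2 | split; [exact H1 | exact (rinv_mono H3)]].
  - intros S [S1 [S2 S3]].
    exact (rinv_mono (Hmax (rinv S) (conj S2 (conj S1 (rinv_mono S3))))).
Qed.

Hypothesis hZ : difunctional Z.
Hypothesis hR : greatest (WL23_sol V W Z) R.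

Lemma greatest_WL23_wlinked i : wlinked (V i) (W i) R.
Proof. destruct hR as [[H1 [H2 _]] _]; split; [apply H1 | apply H2]. Qed.

Lemma greatest_WL23_le : rle R Z.
Proof. apply hR. Qed.

Lemma WL23_le_greatest (U : frel L A B) :
  (forall i, wlinked (V i) (W i) U) -> rle U (rcomp (rcomp Z (rinv Z)) Z) -> rle U R.
Proof.
  intros HU HUZ; apply hR; split; [|split]; [intro i; apply HU .. |].
  exact (rle_trans HUZ hZ).
Qed.

Lemma greatest_WL23_difunctional : difunctional R.
Proof.
  apply WL23_le_greatest.
  - intro i; apply wlinked_rcomp with (V i); [apply wlinked_rcomp with (W i) |];
      [| apply wlinked_rinv |]; apply greatest_WL23_wlinked.
  - pose proof greatest_WL23_le as HRZ.
    apply rcomp_mono; [apply rcomp_mono; [| apply rinv_mono] |]; exact HRZ.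
Qed.

Lemma greatest_WL14_kernel :
  total R -> greatest (WL14_sol V (rcomp Z (rinv Z))) (kernel R).
Proof.
  intro Ht; pose proof greatest_WL23_le as HRZ; split.
  - rewrite (kernel_eq Ht greatest_WL23_difunctional).
    assert (Hl : forall i, wlinked (V i) (V i) (rcomp R (rinv R))).
    { intro i; apply wlinked_rcomp with (W i);
        [| apply wlinked_rinv]; apply greatest_WL23_wlinked. }
    assert (HKZ : rle (rcomp R (rinv R)) (rcomp Z (rinv Z))).
    { apply rcomp_mono; [| apply rinv_mono]; exact HRZ. }
    split; [intro i; apply Hl | split; [intro i; apply Hl | split]]; [exact HKZ |].
    rewrite rinv_rcomp; exact HKZ.
  - intros S [HS1 [HS2 [HSZ HSiZ]]].
    assert (Hl : forall i, wlinked (V i) (V i) S) by (intro i; split; [apply HS2 | apply HS1]).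
    apply le_kernel; apply WL23_le_greatest.
    + intro i; apply wlinked_rcomp with (V i); [apply Hl | apply greatest_WL23_wlinked].
    + now apply rcomp_mono.
    + intro i; apply wlinked_rcomp with (V i);
        [apply wlinked_rinv, Hl | apply greatest_WL23_wlinked].
    + now apply rcomp_mono.
Qed.

End GreatestSolution.

Theorem theorem7p3 (L : CRL) (A B I : Type)
  (hA : inhabited A) (hB : inhabited B) (hI : inhabited I)
  (V : I -> frel L A A) (W : I -> frel L B B) (Z : frel L A B)
  (hZ : uniform Z)
  (hsol : exists U : frel L A B, WL23_sol V W Z U /\ uniform U)
  (R : frel L A B) (hR : greatest (WL23_sol V W Z) R) :
  uniform R /\
  greatest (WL14_sol V (rcomp Z (rinv Z))) (kernel R) /\
  greatest (WL14_sol W (rcomp (rinv Z) Z)) (cokernel R).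
Proof.
  destruct hsol as [U [HU [HUt [HUs _]]]].
  pose proof (proj2 hR U HU) as HUR.
  assert (HRt : total R) by exact (total_mono HUR HUt).
  assert (HRs : total (rinv R)) by exact (total_mono (rinv_mono HUR) HUs).
  pose proof (uniform_difunctional hZ) as HZd.
  split; [|split].
  - exact (total_difunctional_uniform HRt HRs (greatest_WL23_difunctional HZd hR)).
  - exact (greatest_WL14_kernel HZd hR HRt).
  - exact (greatest_WL14_kernel (difunctional_rinv HZd) (greatest_WL23_rinv hR) HRs).
Qed.
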